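(* Let $q$ be a prime power, $L\ge1$, and let $\mathcal{N}_1$ be a multicast network with source dimension $\omega\ge2$ that is vector linearly solvable over $\mathrm{GF}(q)^L$ but not scalar linearly solvable over $\mathrm{GF}(q^L)$. Set $n=q^L$ and construct the multicast network $\mathcal{N}$ of source dimension $\omega$ as follows: create a source node $s'$ and a node $s$, with $\omega$ parallel edges from $s'$ to $s$; add $\mathcal{N}_1$ as a subnetwork and create $\omega$ edges from $s$ to the original source node $s_1$ of $\mathcal{N}_1$; add an $(n+1,2)$-combination network $\mathcal{N}_2$ as another subnetwork and create $2$ edges from $s$ to its original source node $s_2$; for every original receiver $t$ of $\mathcal{N}_2$, create $\omega-2$ edges from $s$ to $t$. The receivers of $\mathcal{N}$ are exactly the original receivers of $\mathcal{N}_1$ and of $\mathcal{N}_2$. Then $\mathcal{N}$ has a vector linear solution over $\mathrm{GF}(q)^L$; $\mathcal{N}$ is not scalar linearly solvable over $\mathrm{GF}(q')$ for any prime power $q'\le q^L$; and $\mathcal{N}$ is not vector linearly solvable over $\mathrm{GF}(q')^{L'}$ for any prime power $q'$ and integer $L'\ge1$ with $q'^{L'}<q^L$.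
   Context: A multicast network is a finite directed acyclic multigraph with a unique source node $s$ and a set $T$ of receivers; every edge has unit capacity. $In(v)$, $Out(v)$ denote the incoming/outgoing edges of node $v$; $\omega=|Out(s)|$ is the source dimension, and every receiver has $\omega$ edge-disjoint paths from $s$. For a prime power $q$ and $L\ge1$, a vector linear code over $\mathrm{GF}(q)^L$ (of dimension $L$ over $\mathrm{GF}(q)$) assigns to each pair $(d,e)$ of edges an $L\times L$ matrix $\mathbf{K}_{d,e}$ over $\mathrm{GF}(q)$, zero unless $d\in In(v)$, $e\in Out(v)$ for some node $v$. Global encoding kernels are $\omega L\times L$ matrices $\mathbf{F}_e$ with $[\mathbf{F}_e]_{e\in Out(s)}$ the $\omega L\times\omega L$ identity and $\mathbf{F}_e=\sum_{d\in In(v)}\mathbf{F}_d\mathbf{K}_{d,e}$ for $e\in Out(v)$, $v\ne s$. The code is a vector linear solution if $[\mathbf{F}_e]_{e\in In(t)}$ has rank $\omega L$ for every receiver $t$; the network is then vector linearly solvable over $\mathrm{GF}(q)^L$. Scalar linear codes/solutions over $\mathrm{GF}(Q)$ are the case of dimension $1$ over $\mathrm{GF}(Q)$. The $(n+1,2)$-combination network consists of a source node, $n+1$ intermediate nodes each connected from the source by one edge, and, for every pair of distinct intermediate nodes, a receiver connected by one edge from each of the two; it has source dimension $2$. *)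

From HB Require Import structures.
From mathcomp Require Import all_boot all_order all_algebra.
Set Implicit Arguments. Unset Strict Implicit. Unset Printing Implicit Defensive.
Import GRing.Theory.
Local Open Scope ring_scope.

(* A network is given by a finite node type V, a finite edge type E (so      *)
(* parallel edges are allowed: a multigraph), tail/head maps, a source s and *)
(* a set T of receivers.  All edges have unit capacity.                       *)
Section Network.
Variables (V E : finType) (tl hd : E -> V).

Definition In_ (v : V) : {set E} := [set e | hd e == v].
Definition Out_ (v : V) : {set E} := [set e | tl e == v].

Definition acyclic : Prop := exists r : V -> nat, forall e, (r (tl e) < r (hd e))%N.

Definition is_epath (u v : V) (p : seq E) : bool :=
  if p is e :: p' then
    [&& tl e == u, path (fun a b => hd a == tl b) e p' & hd (last e p') == v]
  else false.

Definition edge_disjoint_paths (k : nat) (u v : V) : Prop :=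
  exists P : 'I_k -> seq E,
    (forall i, is_epath u v (P i)) /\
    (forall i j, i != j -> [disjoint P i & P j]).

Definition src_dim (s : V) : nat := #|Out_ s|.

Definition multicast_network (s : V) (T : {set V}) : Prop :=
  [/\ acyclic, In_ s = set0 &
      forall t, t \in T -> edge_disjoint_paths (src_dim s) s t].

(* the L columns of the (w*L) x (w*L) identity corresponding to block i *)
Definition id_block (F : fieldType) (w L : nat) (i : nat) : 'M[F]_(w * L, L) :=
  \matrix_(r, c) (((r : nat) == i * L + c)%N)%:R.

Definition in_concat (F : fieldType) (m L : nat) (G : E -> 'M[F]_(m, L)) (t : V)
  : 'M[F]_(m, \sum_(j < #|In_ t|) L) :=
  \mxrow_(j < #|In_ t|) G (@enum_val E (mem (In_ t)) j).

Definition is_vl_solution (F : fieldType) (L : nat) (s : V) (T : {set V})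
    (K : E -> E -> 'M[F]_L) (G : E -> 'M[F]_(src_dim s * L, L)) : Prop :=
  [/\
      forall d e, hd d != tl e -> K d e = 0,
      exists iota : E -> 'I_(src_dim s),
        {in Out_ s &, injective iota} /\
        (forall e, e \in Out_ s -> G e = id_block F (src_dim s) L (iota e)),
      forall e, tl e != s -> G e = \sum_(d in In_ (tl e)) G d *m K d e &
      forall t, t \in T -> \rank (in_concat G t) = (src_dim s * L)%N].

Definition vl_solvable (s : V) (T : {set V}) (Q L : nat) : Prop :=
  exists F : finFieldType, #|F| = Q /\
    exists (K : E -> E -> 'M[F]_L) (G : E -> 'M[F]_(src_dim s * L, L)),
      @is_vl_solution F L s T K G.

Definition sl_solvable (s : V) (T : {set V}) (Q : nat) : Prop :=
  vl_solvable s T Q 1.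

End Network.

Definition prime_power (q : nat) : Prop :=
  exists p k : nat, [/\ prime p, (0 < k)%N & q = (p ^ k)%N].

Definition cpair (m : nat) := {x : 'I_m * 'I_m | (x.1 < x.2)%N}.
(* nodes: source (inl (inl tt)), intermediate i, receiver for pair {i<j} *)
Definition cnode (m : nat) : finType := ((unit + 'I_m) + cpair m)%type.
(* edges: source -> i ; intermediate (x.1 if false, x.2 if true) -> receiver x *)
Definition cedge (m : nat) : finType := ('I_m + (cpair m * bool))%type.
Definition ctl (m : nat) (e : cedge m) : cnode m :=
  match e with
  | inl i => inl (inl tt)
  | inr (x, b) => inl (inr (if b then (val x).2 else (val x).1))
  end.
Definition chd (m : nat) (e : cedge m) : cnode m :=
  match e with
  | inl i => inl (inr i)
  | inr (x, _) => inr x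
  end.
Definition csrc (m : nat) : cnode m := inl (inl tt).
Definition crcv (m : nat) : {set cnode m} := [set inr x | x : cpair m].

(* Nodes:  s' | s | V1 | combination-network nodes                           *)
(* Edges:  s'->s (omega) | E1 | s->s1 (omega) | comb. edges | s->s2 (2)     *)
(*         | s->t (omega-2 for every comb. receiver t)                       *)
Section Construction.
Variables (V1 E1 : finType) (tl1 hd1 : E1 -> V1) (s1 : V1) (T1 : {set V1}).
Variables (w n : nat).

Definition Nnode : finType := (((unit + unit) + V1) + cnode n.+1)%type.
Definition Nedge : finType :=
  ((((('I_w + E1) + 'I_w) + cedge n.+1) + 'I_2) + (cpair n.+1 * 'I_(w - 2)))%type.

Definition N_s' : Nnode := inl (inl (inl tt)).
Definition N_s : Nnode := inl (inl (inr tt)).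
Definition N_of1 (v : V1) : Nnode := inl (inr v).
Definition N_of2 (v : cnode n.+1) : Nnode := inr v.

Definition Ntl (e : Nedge) : Nnode :=
  match e with
  | inl (inl (inl (inl (inl _)))) => N_s'
  | inl (inl (inl (inl (inr d)))) => N_of1 (tl1 d)
  | inl (inl (inl (inr _))) => N_s
  | inl (inl (inr d)) => N_of2 (ctl d)
  | inl (inr _) => N_s
  | inr _ => N_s
  end.

Definition Nhd (e : Nedge) : Nnode :=
  match e with
  | inl (inl (inl (inl (inl _)))) => N_s
  | inl (inl (inl (inl (inr d)))) => N_of1 (hd1 d)
  | inl (inl (inl (inr _))) => N_of1 s1
  | inl (inl (inr d)) => N_of2 (chd d)
  | inl (inr _) => N_of2 (csrc n.+1)
  | inr (x, _) => N_of2 (inr x)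
  end.

Definition Nrcv : {set Nnode} :=
  [set N_of1 t | t in T1] :|: [set N_of2 t | t in crcv n.+1].

End Construction.

(* Lifting: [s] sends the message to [s1], its first two blocks to [s2] and
   the remaining [w - 2] blocks straight to every receiver of [N2]; the [q^L + 1]
   intermediate nodes of [N2] carry the lines of the Desarguesian spread of
   [GF(q)^(2L)] (the [GF(q^L)]-lines of [GF(q^L)^2]), any two of which span the
   two blocks, so a solution of [N1] over [GF(q)^L] extends to [N].
   Bound: in any solution of [N] of dimension [L'] over [GF(q')], the kernels of
   the intermediate nodes of [N2] are [L']-dimensional subspaces of the
   [2L']-dimensional space reaching [s2], pairwise complementary because each
   receiver gets only [w - 2] further blocks; counting nonzero vectors gives
   [q^L + 1 <= q'^L' + 1].
   Restriction: a change of basis at [s1] turns a solution of [N] into one of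
   [N1] over the same field, so a scalar solution over [GF(q^L)] is excluded. *)

From HB Require Import structures.
From mathcomp Require Import all_boot all_order all_algebra all_field zify.
Set Implicit Arguments. Unset Strict Implicit. Unset Printing Implicit Defensive.
Import GRing.Theory.
Local Open Scope ring_scope.

(** * Extension fields and spreads *)

Lemma pchar_dvdn_card (F : finFieldType) p : p \in [pchar F] -> (p %| #|F|)%N.
Proof.
move=> pcharFp; have /= cardF := card_pprimeChar pcharFp.
rewrite cardF dvdn_exp // lt0n; apply: contraTneq (finNzRing_gt1 F) => n0.
by rewrite cardF n0.
Qed.

Lemma separable_Xn_subX (R : fieldType) (m : nat) :
  (1 < m)%N -> m%:R = 0 :> R -> separable_poly ('X^m - 'X : {poly R}).
Proof.
move=> m_gt1 m0; have m_gt0 := ltnW m_gt1.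
have m1_gt0 : (0 < m.-1)%N by rewrite -ltnS prednK.
have -> : 'X^m - 'X = ('X^(m.-1) - 1) * ('X - 0) :> {poly R}.
  by rewrite subr0 mulrBl mul1r -exprSr prednK.
rewrite separable_root andbC /root !hornerE subr_eq0 eq_sym expr0n gtn_eqF //.
rewrite oner_eq0 cyclotomic.separable_Xn_sub_1 // -subn1 natrB // subr_eq0 m0.
by rewrite eq_sym oner_eq0.
Qed.

(* The splitting field of ['X^m - 'X], [m = #|F|^L], consists of its [m] roots:
   they form the fixed field of the [L]-th power of the Frobenius of [F]. *)
Lemma fieldExt_of_dim (F : finFieldType) (L : nat) :
  (0 < L)%N -> exists K : fieldExtType F, \dim {:K} = L.
Proof.
move=> L_gt0; have [p _ pcharFp] := finPcharP F; have F_gt1 := finNzRing_gt1 F.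
pose m := (#|F| ^ L)%N; have m_gt1 : (1 < m)%N by rewrite (ltn_exp2l 0).
pose q (R : nzRingType) : {poly R} := 'X^m - 'X.
have size_q R : size (q R) = m.+1.
  by rewrite size_polyDl size_polyXn // size_polyN size_polyX.
have /FinSplittingFieldFor[/= L0 splitLq]: q F != 0.
  by rewrite -size_poly_eq0 size_q.
rewrite rmorphB rmorphXn /= map_polyX -/(q L0) in splitLq.
have{splitLq} [zs DqL defL] := splitLq.
have pcharL: p \in [pchar L0] by rewrite pchar_lalg.
have Uzs : uniq zs.
  rewrite -separable_prod_XsubC -(eqp_separable DqL) separable_Xn_subX //.
  by apply/eqP; rewrite -(dvdn_pcharf pcharL) dvdn_exp ?pchar_dvdn_card.
have /finField_galois_generator[/= a _ Da]: (1 <= {:L0})%VS by apply: sub1v.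
pose Em := fixedSpace (a ^+ L)%g; rewrite dimv1 expn1 in Da.
have in_zs: zs =i Em.
  move=> z; rewrite -root_prod_XsubC -(eqp_root DqL) (sameP fixedSpaceP eqP).
  rewrite /root !hornerE subr_eq0 /= /m; congr (_ == z).
  elim: (L) => [|i IHi]; first by rewrite gal_id.
  by rewrite expgSr expnSr exprM IHi galM ?Da ?memvf.
have defEm: Em = {:L0}%VS.
  apply/eqP; rewrite eqEsubv subvf -defL -[Em]subfield_closed agenvS //.
  by rewrite subv_add sub1v; apply/span_subvP=> z; rewrite in_zs.
pose Fm := FinFieldExtType L0; exists L0.
have cardFm : #|Fm| = m.
  suffices /eq_card-> : Fm =i zs.
    apply: succn_inj; rewrite (card_uniqP _) //= -(size_prod_XsubC _ id).
    by rewrite -(eqp_size DqL) size_q.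
  by move=> z; rewrite in_zs defEm memvf.
have : #|Fm| = (#|F| ^ \dim {:L0})%N.
  by have := card_vspace (fullv : {vspace finvect_type L0}); rewrite card_vspacef.
by rewrite cardFm => /eqP; rewrite eqn_exp2l // => /eqP.
Qed.

Section Spread.
Import VectorInternalTheory.
Variables (F : finFieldType) (K : fieldExtType F).
Local Notation m := (dim K).

Definition mul_mx (a : K) : 'M[F]_m := \matrix_(i < m) v2r (a * r2v (delta_mx 0 i)).

Lemma mul_mxE (a : K) (u : 'rV[F]_m) : u *m mul_mx a = v2r (a * r2v u).
Proof.
rewrite mulmx_sum_row {2}(row_sum_delta u) linear_sum /= mulr_sumr linear_sum.
by apply: eq_bigr => i _; rewrite rowK linearZ /= -scalerAr linearZ.
Qed.

(* The graph of multiplication by [a], or the vertical line for [None]. *)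
Definition spread_mx (a : option K) : 'M[F]_(m, m + m) :=
  if a is Some a then row_mx 1%:M (mul_mx a) else row_mx 0 1%:M.

Lemma spread_mx_free a : row_free (spread_mx a).
Proof.
apply/row_freeP; case: a => [a|].
  by exists (col_mx 1%:M 0); rewrite mul_row_col mul1mx mulmx0 addr0.
by exists (col_mx 0 1%:M); rewrite mul_row_col mul1mx mulmx0 add0r.
Qed.

Lemma spread_mx_cap0 a b : a != b -> (spread_mx a :&: spread_mx b)%MS == 0.
Proof.
wlog [a' ->] : a b / exists a', a = Some a'.
  move=> IH; case: a => [a'|]; first by apply: IH; exists a'.
  case: b => [b'|] // _; by rewrite capmxC; apply: IH; first exists b'.
move=> neq_ab; apply/rowV0P => v; rewrite sub_capmx.
case/andP=> /submxP[u ->] /submxP[u'].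
rewrite /= mul_mx_row mulmx1.
case: b neq_ab => [b|] neq_ab /=.
  rewrite mul_mx_row mulmx1 => /eq_row_mx[<-]; rewrite !mul_mxE => /v2r_inj.
  move/eqP; rewrite -subr_eq0 -mulrBl mulf_eq0 subr_eq0.
  case/orP=> [/eqP eq_ab | /eqP u0]; first by rewrite eq_ab eqxx in neq_ab.
  have {}u0 : u = 0 by rewrite -[u]r2vK u0 linear0.
  by rewrite u0 linear0 mulr0 linear0 row_mx0.
by rewrite mul_mx_row mulmx0 => /eq_row_mx[-> _]; rewrite mul0mx row_mx0.
Qed.

Lemma spread_mx_compl a b : a != b ->
  \rank (spread_mx a + spread_mx b)%MS = (m + m)%N.
Proof.
move=> neq_ab; have := mxrank_sum_cap (spread_mx a) (spread_mx b).
rewrite (eqP (spread_mx_free a)) (eqP (spread_mx_free b)).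
by rewrite (eqP (spread_mx_cap0 neq_ab)) mxrank0 addn0.
Qed.

End Spread.

Lemma exists_spread (F : finFieldType) (L : nat) : (0 < L)%N ->
  exists C : 'I_(#|F| ^ L).+1 -> 'M[F]_(L, L + L),
    forall i j, i != j -> \rank (C i + C j)%MS = (L + L)%N.
Proof.
move=> /(fieldExt_of_dim F)[K]; rewrite dimvf => <-.
pose FK := finvect_type K.
have cardFK : #|FK| = (#|F| ^ dim K)%N.
  by have := card_vspace (fullv : {vspace FK}); rewrite card_vspacef dimvf.
pose pts := None :: map Some (enum FK).
have uniq_pts : uniq pts.
  by rewrite /= (map_inj_uniq (@Some_inj _)) enum_uniq andbT; apply/mapP; case.
have size_pts : size pts = (#|F| ^ dim K).+1 by rewrite /= size_map -cardE cardFK.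
exists (fun i => spread_mx (nth None pts i)) => i j neq_ij.
by apply: spread_mx_compl; rewrite nth_uniq ?size_pts.
Qed.

(** * Linear codes on an arbitrary network *)

Section IdBlock.
Variables (F : fieldType) (w L : nat).
Local Notation IB := (id_block F w L).

Lemma sum_id_block_select (j : nat) : (j < w)%N ->
  \sum_(i < w) IB i *m ((i : nat) == j)%:R = IB j.
Proof.
move=> j_lt; rewrite (bigD1 (Ordinal j_lt)) //= eqxx mulmx1 big1 ?addr0 // => i neq_ij.
have /negbTE-> : (i : nat) != j by apply: contra neq_ij => /eqP ij; apply/eqP/val_inj.
by rewrite mulr0n mulmx0.
Qed.

Lemma block_index_lt (i : 'I_w) (c : 'I_L) : (i * L + c < w * L)%N.
Proof. by have := ltn_ord i; have := ltn_ord c; nia. Qed.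

Lemma row_id_blockT (i : 'I_w) (c : 'I_L) :
  row c (IB i)^T = row (Ordinal (block_index_lt i c)) 1%:M.
Proof. by apply/rowP => k; rewrite !mxE eq_sym. Qed.

Lemma id_blocks_full : (0 < L)%N -> (1%:M <= \sum_(j < w) <<(IB j)^T>>)%MS.
Proof.
move=> L_gt0; apply/row_subP => r.
have r_lt : (r %/ L < w)%N by rewrite ltn_divLR // mulnC.
rewrite (sumsmx_sup (Ordinal r_lt)) // genmxE.
have -> : row r 1%:M = row (Ordinal (ltn_pmod r L_gt0)) (IB (Ordinal r_lt))^T.
  by rewrite row_id_blockT; congr row; apply: val_inj; rewrite /= -divn_eq.
exact: row_sub.
Qed.

End IdBlock.

Section Network.
Variables (V E : finType) (tl hd : E -> V).

Definition in_span (F : fieldType) (k L : nat) (G : E -> 'M[F]_(k, L)) (t : V) :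
  'M[F]_k := (\sum_(d in In_ hd t) <<(G d)^T>>)%MS.

Lemma rank_in_concat (F : fieldType) k L (G : E -> 'M[F]_(k, L)) t :
  \rank (in_concat hd G t) = \rank (in_span G t).
Proof.
rewrite -mxrank_tr /in_concat tr_mxrow eqmx_col /in_span.
by rewrite (big_enum_val (fun d => <<(G d)^T>>%MS)).
Qed.

(* [is_vl_solution] with the source dimension [m] as a free parameter and
   decodability phrased through row spaces. *)
Definition solves (F : fieldType) (m L : nat) (s : V) (T : {set V})
    (K : E -> E -> 'M[F]_L) (G : E -> 'M[F]_(m * L, L)) : Prop :=
  [/\ forall d e, hd d != tl e -> K d e = 0,
      exists iota : E -> 'I_m,
        {in Out_ tl s &, injective iota} /\
        (forall e, e \in Out_ tl s -> G e = id_block F m L (iota e)),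
      forall e, tl e != s -> G e = \sum_(d in In_ hd (tl e)) G d *m K d e &
      forall t, t \in T -> \rank (in_span G t) = (m * L)%N].

Lemma vl_solvableP s T Q L m : src_dim tl s = m ->
  vl_solvable tl hd s T Q L <->
  exists F : finFieldType, #|F| = Q /\ exists K G, @solves F m L s T K G.
Proof.
move=> <-; split=> -[F [cardF [K [G [K0 src rec dec]]]]]; exists F; split=> //;
  exists K, G; split=> // t Tt; rewrite ?rank_in_concat ?dec //.
by rewrite -rank_in_concat dec.
Qed.

Lemma epath_rank_lt (r : V -> nat) : (forall e, r (tl e) < r (hd e))%N ->
  forall u v p, is_epath tl hd u v p -> (r u < r v)%N.
Proof.
move=> r_lt u v [|e p] //= /and3P[/eqP <- path_p /eqP <-].
elim: p e path_p => [|e' p IH] e /=; first by rewrite r_lt.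
case/andP=> /eqP e_e' path_p; apply: ltn_trans (r_lt e) _; rewrite e_e'; exact: IH.
Qed.

Lemma multicast_rcv_neq_src s T : multicast_network tl hd s T ->
  (0 < src_dim tl s)%N -> forall t, t \in T -> t != s.
Proof.
case=> [[r r_lt] _ paths] w_gt0 t /paths[P [epathP _]].
have := epath_rank_lt r_lt (epathP (Ordinal w_gt0)).
by apply: contraTneq => ->; rewrite ltnn.
Qed.

Lemma kernel_sub_in_span (F : fieldType) L m s K (G : E -> 'M[F]_(m * L, L)) :
  (forall e, tl e != s -> G e = \sum_(d in In_ hd (tl e)) G d *m K d e) ->
  forall e, tl e != s -> ((G e)^T <= in_span G (tl e))%MS.
Proof.
move=> rec e /rec ->; rewrite linear_sum /=; apply/summx_sub => d In_d.
rewrite trmx_mul; apply: submx_trans (submxMl _ _) _.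
by rewrite /in_span (sumsmx_sup d) // genmxE.
Qed.

Section SourceEnumeration.
Variables (s : V) (m : nat) (x0 : E).
Hypotheses (Out_x0 : x0 \in Out_ tl s) (card_Out : #|Out_ tl s| = m).

Definition out_index (e : E) : 'I_m := cast_ord card_Out (enum_rank_in Out_x0 e).
Definition out_edge (j : 'I_m) : E :=
  @enum_val E (mem (Out_ tl s)) (cast_ord (esym card_Out) j).

Lemma out_indexK : {in Out_ tl s, cancel out_index out_edge}.
Proof. by move=> e Oe; rewrite /out_edge /out_index cast_ordK enum_rankK_in. Qed.

Lemma out_index_inj : {in Out_ tl s &, injective out_index}.
Proof. exact: can_in_inj out_indexK. Qed.

Lemma solves_no_receivers (F : fieldType) (L : nat) :
  exists (K : E -> E -> 'M[F]_L) (G : E -> 'M[F]_(m * L, L)), solves s set0 K G.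
Proof.
exists (fun _ _ => 0), (fun e => if tl e == s then id_block F m L (out_index e) else 0).
split=> //.
- exists out_index; split; first exact: out_index_inj.
  by move=> e; rewrite inE => ->.
- by move=> e /negbTE ->; rewrite big1 // => d _; exact: mulmx0.
- by move=> t; rewrite inE.
Qed.

End SourceEnumeration.
End Network.

Arguments vl_solvableP {V E tl hd s T Q L m}.

(** * The network N *)

Section ConstructedNetwork.
Variables (V1 E1 : finType) (tl1 hd1 : E1 -> V1) (s1 : V1) (w n : nat).
Local Notation NE := (Nedge E1 w n).
Local Notation Ntl := (@Ntl V1 E1 tl1 w n).
Local Notation Nhd := (@Nhd V1 E1 hd1 s1 w n).
Local Notation s' := (N_s' V1 n).
Local Notation s := (N_s V1 n).

Definition e_s's (i : 'I_w) : NE := inl (inl (inl (inl (inl i)))).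
Definition e_N1 (d : E1) : NE := inl (inl (inl (inl (inr d)))).
Definition e_ss1 (j : 'I_w) : NE := inl (inl (inl (inr j))).
Definition e_mid (i : 'I_n.+1) : NE := inl (inl (inr (inl i))).
Definition e_rcv (x : cpair n.+1) (b : bool) : NE := inl (inl (inr (inr (x, b)))).
Definition e_ss2 (k : 'I_2) : NE := inl (inr k).
Definition e_st (x : cpair n.+1) (k : 'I_(w - 2)) : NE := inr (x, k).

Definition mid_node (i : 'I_n.+1) : cnode n.+1 := inl (inr i).

Lemma N_of1_eq (a b : V1) : (N_of1 n a == N_of1 n b) = (a == b). Proof. by []. Qed.
Lemma N_of2_eq (a b : cnode n.+1) : (N_of2 V1 a == N_of2 V1 b) = (a == b).
Proof. by []. Qed.
Lemma mid_node_eq (i j : 'I_n.+1) : (mid_node i == mid_node j) = (i == j).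
Proof. by []. Qed.

Section InBig.
Variables (R : Type) (idx : R) (op : Monoid.com_law idx) (f : NE -> R).

Let big_In_hd v :
  \big[op/idx]_(d in In_ Nhd v) f d = \big[op/idx]_(d | Nhd d == v) f d.
Proof. by apply: eq_bigl => d; rewrite inE. Qed.

Let big_pair (I J : finType) (P : I * J -> R) :
  \big[op/idx]_p P p = \big[op/idx]_i \big[op/idx]_j P (i, j).
Proof. by rewrite pair_bigA; apply: eq_bigr => -[]. Qed.

Let big_select (I J : finType) (x : I) (c : I -> bool) (P : I -> J -> R) :
  (forall i, c i = (i == x)) ->
  \big[op/idx]_i \big[op/idx]_j (if c i then P i j else idx) = \big[op/idx]_j P x j.
Proof.
move=> cE; rewrite (bigD1 x) //= cE eqxx [X in op _ X]big1 ?Monoid.mulm1 // => i.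
by rewrite cE => /negbTE->; rewrite big1_eq.
Qed.

Local Ltac expand_In :=
  rewrite big_In_hd big_mkcond !big_sumType /= !big_pair /= ?big1_eq
    ?Monoid.mulm1 ?Monoid.mul1m ?N_of1_eq ?N_of2_eq ?mid_node_eq.

Lemma big_In_s : \big[op/idx]_(d in In_ Nhd s) f d = \big[op/idx]_(i < w) f (e_s's i).
Proof. by expand_In. Qed.

Lemma big_In_N1 u : \big[op/idx]_(d in In_ Nhd (N_of1 n u)) f d =
  op (\big[op/idx]_(d in In_ hd1 u) f (e_N1 d))
     (if u == s1 then \big[op/idx]_(j < w) f (e_ss1 j) else idx).
Proof.
expand_In; congr (op _ _).
  by rewrite [RHS]big_mkcond; apply: eq_bigr => d _; rewrite inE.
by rewrite eq_sym; case: eqP => _ //; exact: big1_eq.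
Qed.

Lemma big_In_s2 :
  \big[op/idx]_(d in In_ Nhd (N_of2 V1 (csrc n.+1))) f d = \big[op/idx]_(k < 2) f (e_ss2 k).
Proof. by expand_In. Qed.

Lemma big_In_mid i : \big[op/idx]_(d in In_ Nhd (N_of2 V1 (mid_node i))) f d = f (e_mid i).
Proof. by expand_In; rewrite -big_mkcond big_pred1_eq. Qed.

Lemma big_In_rcv x : \big[op/idx]_(d in In_ Nhd (N_of2 V1 (inr x))) f d =
  op (\big[op/idx]_(b : bool) f (e_rcv x b)) (\big[op/idx]_(k < w - 2) f (e_st x k)).
Proof. by expand_In; congr (op _ _); apply: big_select. Qed.

End InBig.

Lemma Out_s'E : Out_ Ntl s' = [set e_s's i | i : 'I_w].
Proof.
apply/setP => e; rewrite inE; apply/idP/imsetP => [|[i _ ->] //].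
by case: e => [[[[[i|]|]|]|]|] // _; exists i.
Qed.

Lemma src_dim_s' : src_dim Ntl s' = w.
Proof. by rewrite /src_dim Out_s'E card_imset ?card_ord // => i j [->]. Qed.

End ConstructedNetwork.

Arguments e_s's {E1 w n}.
Arguments e_N1 {E1 w n}.
Arguments e_ss1 {E1 w n}.
Arguments e_mid {E1 w n}.
Arguments e_rcv {E1 w n}.
Arguments e_ss2 {E1 w n}.
Arguments e_st {E1 w n}.

(** * Lifting a solution of N1 to N *)

Section LiftSolution.
Variables (V1 E1 : finType) (tl1 hd1 : E1 -> V1) (s1 : V1) (T1 : {set V1}) (w n : nat).
Variables (F : fieldType) (L : nat) (K1 : E1 -> E1 -> 'M[F]_L).
Variables (G1 : E1 -> 'M[F]_(w * L, L)) (iota1 : E1 -> 'I_w).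
Variable C : 'I_n.+1 -> 'M[F]_(L, L + L).
Hypotheses (L_gt0 : (0 < L)%N) (w_ge2 : (2 <= w)%N) (In_s1 : In_ hd1 s1 = set0).
Hypotheses (T1_neq_s1 : forall t, t \in T1 -> t != s1).
Hypotheses (sol1 : solves tl1 hd1 s1 T1 K1 G1).
Hypothesis G1_Out : forall e, e \in Out_ tl1 s1 -> G1 e = id_block F w L (iota1 e).
Hypothesis C_compl : forall i j, i != j -> \rank (C i + C j)%MS = (L + L)%N.

Local Notation NE := (Nedge E1 w n).
Local Notation Ntl := (@Ntl V1 E1 tl1 w n).
Local Notation Nhd := (@Nhd V1 E1 hd1 s1 w n).
Local Notation IB := (id_block F w L).

(* Node [i] of the combination network carries [C i] applied to the first two
   message blocks, which [s] forwards to [s2]; every other block travels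
   directly from [s] to the receivers. *)
Definition comb_global (i : 'I_n.+1) : 'M[F]_(w * L, L) :=
  IB 0 *m (lsubmx (C i))^T + IB 1 *m (rsubmx (C i))^T.

Definition lift_global (e : NE) : 'M[F]_(w * L, L) :=
  match e with
  | inl (inl (inl (inl (inl i)))) => IB i
  | inl (inl (inl (inl (inr d)))) => G1 d
  | inl (inl (inl (inr j))) => IB j
  | inl (inl (inr (inl i))) => comb_global i
  | inl (inl (inr (inr (x, b)))) => comb_global (if b then (val x).2 else (val x).1)
  | inl (inr k) => IB k
  | inr (x, k) => IB (k + 2)
  end.

Definition lift_kernel (d e : NE) : 'M[F]_L :=
  match d, e with
  | inl (inl (inl (inl (inl i)))), inl (inl (inl (inr j))) => ((i : nat) == j)%:R
  | inl (inl (inl (inl (inl i)))), inl (inr k) => ((i : nat) == k)%:R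
  | inl (inl (inl (inl (inl i)))), inr (x, k) => ((i : nat) == (k + 2)%N)%:R
  | inl (inl (inl (inl (inr d')))), inl (inl (inl (inl (inr e')))) => K1 d' e'
  | inl (inl (inl (inr j))), inl (inl (inl (inl (inr e')))) =>
      ((tl1 e' == s1) && ((iota1 e' : nat) == j))%:R
  | inl (inr k), inl (inl (inr (inl i))) =>
      if (k : nat) == 0%N then (lsubmx (C i))^T else (rsubmx (C i))^T
  | inl (inl (inr (inl i))), inl (inl (inr (inr (x, b)))) =>
      (i == if b then (val x).2 else (val x).1)%:R
  | _, _ => 0
  end.

Lemma lift_kernel0 d e : Nhd d != Ntl e -> lift_kernel d e = 0.
Proof.
case: sol1 => K1_0 _ _ _.
case: d => [[[[[i|d]|j]|[i|[x b]]]|k]|[x k]];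
case: e => [[[[[i'|d']|j']|[i'|[x' b']]]|k']|[x' k']] //=; try by rewrite eqxx.
- exact: K1_0.
- by case: (tl1 d' =P s1) => [->|] //=; rewrite eqxx.
- by rewrite N_of2_eq mid_node_eq; case: eqP.
Qed.

Lemma lift_global_rec e : Ntl e != N_s' V1 n ->
  lift_global e = \sum_(d in In_ Nhd (Ntl e)) lift_global d *m lift_kernel d e.
Proof.
case: sol1 => _ _ rec1 _.
case: e => [[[[[i|d]|j]|[i|[x b]]]|k]|[x k]] //= _.
- rewrite big_In_N1 /=; case: (tl1 d =P s1) => [d_s1|/eqP d_s1] /=.
    rewrite d_s1 In_s1 big_set0 add0r /=.
    under eq_bigr => j _ do rewrite eq_sym.
    by rewrite sum_id_block_select // G1_Out // inE d_s1.
  by rewrite addr0 -rec1.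
- by rewrite big_In_s /= sum_id_block_select.
- by rewrite big_In_s2 !big_ord_recl big_ord0 /= addr0.
- by rewrite big_In_mid /= eqxx mulmx1.
- by rewrite big_In_s /= sum_id_block_select // (leq_trans _ w_ge2).
- by rewrite big_In_s /= sum_id_block_select // addnC -ltn_subRL.
Qed.

Definition first_two_blocks : 'M[F]_(L + L, w * L) := col_mx (IB 0)^T (IB 1)^T.

Lemma comb_globalT i : (comb_global i)^T = C i *m first_two_blocks.
Proof.
rewrite /comb_global -[in RHS](hsubmxK (C i)) mul_row_col linearD /=.
by rewrite !trmx_mul !trmxK.
Qed.

Lemma first_two_blocks_sub i j : i != j ->
  (first_two_blocks <= <<(comb_global i)^T>> + <<(comb_global j)^T>>)%MS.
Proof.
move=> neq_ij; rewrite (adds_eqmx (genmxE _) (genmxE _)) !comb_globalT.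
rewrite -addsmxMr -{1}[first_two_blocks]mul1mx submxMr //.
by apply: submx_full; rewrite /row_full C_compl.
Qed.

Lemma id_block01_sub (j : 'I_w) : (j < 2)%N ->
  ((IB j)^T <= first_two_blocks)%MS.
Proof.
case: j => -[|[|j]] //= _ _.
  have -> : (IB 0)^T = row_mx 1%:M 0 *m first_two_blocks.
    by rewrite mul_row_col mul1mx mul0mx addr0.
  exact: submxMl.
have -> : (IB 1)^T = row_mx 0 1%:M *m first_two_blocks.
  by rewrite mul_row_col mul1mx mul0mx add0r.
exact: submxMl.
Qed.

Lemma lift_decodes t : t \in Nrcv T1 n ->
  \rank (in_span Nhd lift_global t) = (w * L)%N.
Proof.
case: sol1 => _ _ _ dec1.
case/setUP => /imsetP[t1 T1t1 ->].
  by rewrite /in_span big_In_N1 (negbTE (T1_neq_s1 T1t1)) Monoid.mulm1 dec1.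
case/imsetP: T1t1 => x _ ->.
rewrite /in_span big_In_rcv; apply/eqP; rewrite eqn_leq rank_leq_col /=.
rewrite -{1}(mxrank1 F (w * L)) mxrankS //.
apply: submx_trans (@id_blocks_full F w L L_gt0) _.
apply/sumsmx_subP => j _; rewrite genmxE.
case: (ltnP j 2) => j_lt2.
  apply: submx_trans (addsmxSl _ _); apply: submx_trans (id_block01_sub j_lt2) _.
  have neq_x : (val x).1 != (val x).2 by rewrite neq_ltn (valP x).
  apply: submx_trans (first_two_blocks_sub neq_x) _.
  by rewrite addsmx_sub (sumsmx_sup false) // ?(sumsmx_sup true).
have j_lt : (j - 2 < w - 2)%N by have := ltn_ord j; lia.
apply: submx_trans (addsmxSr _ _).
by rewrite (sumsmx_sup (Ordinal j_lt)) // genmxE /= subnK.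
Qed.

Lemma lift_solves :
  solves Ntl Nhd (N_s' V1 n) (Nrcv T1 n) lift_kernel lift_global.
Proof.
have w_gt0 : (0 < w)%N by apply: leq_trans w_ge2.
split.
- exact: lift_kernel0.
- exists (fun e : NE => if e is inl (inl (inl (inl (inl i)))) then i else Ordinal w_gt0).
  split; last by move=> e; rewrite Out_s'E => /imsetP[i _ ->].
  by move=> e1 e2; rewrite !Out_s'E => /imsetP[i _ ->] /imsetP[j _ ->] /= ->.
- exact: lift_global_rec.
- exact: lift_decodes.
Qed.

End LiftSolution.

(** * Solutions of N bound the field size *)

Section Counting.
Variable F : finFieldType.

Definition rowspace_set k N (A : 'M[F]_(k, N)) := [set v : 'rV[F]_N | (v <= A)%MS].

Lemma card_rowspace_set k N (A : 'M[F]_(k, N)) :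
  #|rowspace_set A| = (#|F| ^ \rank A)%N.
Proof.
have inj := row_free_inj (row_base_free A).
rewrite -[\rank A]mul1n -card_mx -(card_imset _ (inj 1%N)).
apply: eq_card => v; rewrite inE -(eq_row_base A).
by apply/submxP/imsetP => [[u ->]|[u _ ->]]; exists u.
Qed.

Lemma rank_sum_genmx_le p L N (M : 'I_p -> 'M[F]_(L, N)) :
  (\rank (\sum_(k < p) <<M k>>)%MS <= p * L)%N.
Proof.
elim: p M => [|p IH] M; first by rewrite big_ord0 mxrank0.
rewrite big_ord_recr /=; apply: leq_trans (mxrank_adds_leqif _ _).1 _.
by rewrite mulSnr leq_add ?IH // genmxE rank_leq_row.
Qed.

(* Counting nonzero vectors: [m (Q^L - 1) <= Q^(2L) - 1 = (Q^L - 1) (Q^L + 1)]. *)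
Lemma partial_spread_bound m L N (W : 'M[F]_N) (S : 'I_m -> 'M[F]_(L, N)) :
  (0 < L)%N -> (\rank W <= L + L)%N ->
  (forall i, \rank (S i) = L) -> (forall i, (S i <= W)%MS) ->
  (forall i j, i != j -> (S i :&: S j)%MS == 0) ->
  (m <= (#|F| ^ L).+1)%N.
Proof.
move=> L_gt0 rkW rkS SW capS; pose Q := (#|F| ^ L)%N.
have Q_gt1 : (1 < Q)%N by rewrite (ltn_exp2l 0) // finNzRing_gt1.
pose nz k (A : 'M[F]_(k, N)) := rowspace_set A :\ 0.
have card_nz k (A : 'M[F]_(k, N)) : #|nz _ A| = (#|F| ^ \rank A).-1.
  by have := cardsD1 0 (rowspace_set A); rewrite card_rowspace_set inE sub0mx => ->.
have disj i j : j != i -> [disjoint nz _ (S i) & nz _ (S j)].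
  move=> neq_ji; rewrite -setI_eq0; apply/eqP/setP => v; rewrite !inE.
  apply/negP => /andP[/andP[v_nz vSi] /andP[_ vSj]].
  have : (v <= S i :&: S j)%MS by rewrite sub_capmx vSi vSj.
  by rewrite (eqP (capS i j _)) ?submx0 ?(negbTE v_nz) // eq_sym.
have nz_S0 : set0 \notin [set nz _ (S i) | i : 'I_m].
  apply/imsetP => -[i _ /esym/eqP]; rewrite -cards_eq0 card_nz rkS -/Q.
  by rewrite -subn1 subn_eq0 leqNgt Q_gt1.
have [/eqP tiS injS] := trivIimset (fun i j _ _ => disj i j) nz_S0.
have : (#|cover [set nz _ (S i) | i : 'I_m]| <= #|nz _ W|)%N.
  apply/subset_leq_card/bigcupsP => _ /imsetP[i _ ->]; apply/subsetP => v.
  by rewrite !inE => /andP[-> vS]; apply: submx_trans vS (SW i).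
rewrite -tiS big_imset //= (eq_bigr (fun _ => Q.-1)) => [|i _]; last first.
  by rewrite card_nz rkS.
rewrite sum_nat_const card_ord card_nz => le_mQ.
have le_W : (#|F| ^ \rank W <= Q * Q)%N by rewrite -expnD leq_exp2l ?finNzRing_gt1.
have {le_mQ le_W} : (m * Q.-1 <= Q.+1 * Q.-1)%N.
  apply: leq_trans le_mQ _; move: le_W Q_gt1; set X := (#|F| ^ _)%N; nia.
by rewrite leq_pmul2r // -subn1 subn_gt0.
Qed.

End Counting.

Lemma compl_rank_cap (F : fieldType) L N (A B : 'M[F]_(L, N)) :
  \rank (A + B)%MS = (L + L)%N -> \rank A = L /\ (A :&: B)%MS == 0.
Proof.
move=> rkAB; have := mxrank_sum_cap A B; rewrite rkAB -mxrank_eq0.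
by have := rank_leq_row A; have := rank_leq_row B; lia.
Qed.

Section CombinationBound.
Variables (V1 E1 : finType) (tl1 hd1 : E1 -> V1) (s1 : V1) (T1 : {set V1}) (w n : nat).
Variables (F : finFieldType) (L : nat).
Local Notation NE := (Nedge E1 w n).
Local Notation Ntl := (@Ntl V1 E1 tl1 w n).
Local Notation Nhd := (@Nhd V1 E1 hd1 s1 w n).
Variables (K : NE -> NE -> 'M[F]_L) (G : NE -> 'M[F]_(w * L, L)).
Hypotheses (L_gt0 : (0 < L)%N) (w_ge2 : (2 <= w)%N).
Hypothesis solN : solves Ntl Nhd (N_s' V1 n) (Nrcv T1 n) K G.

Let mid_span i := (G (e_mid i))^T.
Let s2_span := in_span Nhd G (N_of2 V1 (csrc n.+1)).

Let sub_in_span e : Ntl e != N_s' V1 n -> ((G e)^T <= in_span Nhd G (Ntl e))%MS.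
Proof. case: solN => _ _ rec _. exact: (@kernel_sub_in_span _ _ _ _ _ L w _ K G rec e). Qed.

Let rank_s2_span : (\rank s2_span <= L + L)%N.
Proof.
rewrite /s2_span /in_span big_In_s2 addnn -mul2n.
exact: (rank_sum_genmx_le (fun k => (G (e_ss2 k))^T)).
Qed.

Let mid_span_compl i j : i != j -> \rank (mid_span i + mid_span j)%MS = (L + L)%N.
Proof.
wlog lt_ij : i j / (i < j)%N.
  move=> IH neq_ij; case: (ltngtP i j) => [lt_ij|lt_ji|/val_inj eq_ij].
  - exact: IH.
  - by rewrite addsmxC; apply: IH; rewrite // eq_sym.
  - by rewrite eq_ij eqxx in neq_ij.
move=> _; pose x : cpair n.+1 := exist _ (i, j) lt_ij.
have x_rcv : N_of2 V1 (inr x) \in Nrcv T1 n.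
  by apply/setUP; right; apply/imsetP; exists (inr x) => //; apply: imset_f.
case: solN => _ _ _ /(_ _ x_rcv); rewrite /in_span big_In_rcv.
set direct := (\sum_(k < w - 2) _)%MS => dec.
have rk_direct : (\rank direct <= (w - 2) * L)%N by apply: rank_sum_genmx_le.
have sub_ij : ((\sum_b <<(G (e_rcv x b))^T>>)%MS <= mid_span i + mid_span j)%MS.
  apply/sumsmx_subP => b _; rewrite genmxE; apply: submx_trans (sub_in_span _) _ => //.
  by rewrite /in_span big_In_mid genmxE; case: b; [exact: addsmxSr | exact: addsmxSl].
have lower : (w * L <= \rank (mid_span i + mid_span j) + (w - 2) * L)%N.
  rewrite -[X in (X <= _)%N]dec; apply: leq_trans (mxrank_adds_leqif _ _).1 _.
  by rewrite leq_add // mxrankS // addsmxS.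
have upper := (mxrank_adds_leqif (mid_span i) (mid_span j)).1.
have := rank_leq_row (mid_span i); have := rank_leq_row (mid_span j).
have : (2 * L <= w * L)%N by rewrite leq_mul2r w_ge2 orbT.
by rewrite mulnBl in lower; lia.
Qed.

Lemma combination_bound : (n <= #|F| ^ L)%N.
Proof.
have [->//|n_gt0] := posnP n.
apply: (@partial_spread_bound _ n.+1 L _ s2_span mid_span) => //.
- move=> i; pose j : 'I_n.+1 := if i == ord0 then ord_max else ord0.
  have neq_ij : i != j.
    by rewrite /j; case: (i =P ord0) => [->|/eqP //]; rewrite -val_eqE /= eq_sym -lt0n.
  exact: (compl_rank_cap (mid_span_compl neq_ij)).1.
- by move=> i; apply: sub_in_span.
- by move=> i j /mid_span_compl/compl_rank_cap[].
Qed.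

End CombinationBound.

(** * Restricting a solution of N to N1 *)

Section Restriction.
Variables (V1 E1 : finType) (tl1 hd1 : E1 -> V1) (s1 : V1) (T1 : {set V1}) (w n : nat).
Variables (F : fieldType) (L : nat).
Local Notation NE := (Nedge E1 w n).
Local Notation Ntl := (@Ntl V1 E1 tl1 w n).
Local Notation Nhd := (@Nhd V1 E1 hd1 s1 w n).
Variables (K : NE -> NE -> 'M[F]_L) (G : NE -> 'M[F]_(w * L, L)).
Hypotheses (L_gt0 : (0 < L)%N) (w_gt0 : (0 < w)%N) (card_Out : #|Out_ tl1 s1| = w).
Hypotheses (mult : multicast_network tl1 hd1 s1 T1).
Hypothesis solN : solves Ntl Nhd (N_s' V1 n) (Nrcv T1 n) K G.

Local Notation N1_global d := (G (e_N1 d))^T.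
Let source_span := (\sum_(e in Out_ tl1 s1) <<N1_global e>>)%MS.

Let N1_global_sub_in_span d : tl1 d != s1 ->
  (N1_global d <= \sum_(d' in In_ hd1 (tl1 d)) <<N1_global d'>>)%MS.
Proof.
move=> d_s1; case: solN => _ _ rec _.
have := @kernel_sub_in_span _ _ _ _ _ L w _ K G rec (e_N1 d) isT.
by rewrite /in_span /= big_In_N1 (negbTE d_s1) Monoid.mulm1.
Qed.

(* Induction along a topological ranking of [N1]. *)
Let N1_global_sub_source d : (N1_global d <= source_span)%MS.
Proof.
case: mult => [[r r_lt] _ _].
elim: {d}(r (tl1 d)).+1 {-2}d (ltnSn (r (tl1 d))) => [|k IH] d //= lt_dk.
have [d_s1|/eqP d_s1] := tl1 d =P s1.
  by rewrite /source_span (sumsmx_sup d) ?genmxE // inE d_s1.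
apply: submx_trans (N1_global_sub_in_span d_s1) _.
apply/sumsmx_subP => d' /[!inE] /eqP d'_d; rewrite genmxE; apply: IH.
by have := r_lt d'; rewrite d'_d => /leq_trans; apply.
Qed.

Let T1_neq_s1 t : t \in T1 -> t != s1.
Proof. by apply: multicast_rcv_neq_src mult _ t; rewrite /src_dim card_Out. Qed.

Let in_span_N1 t : t \in T1 ->
  in_span Nhd G (N_of1 n t) = (\sum_(d in In_ hd1 t) <<N1_global d>>)%MS.
Proof. by move=> T1t; rewrite /in_span big_In_N1 (negbTE (T1_neq_s1 T1t)) Monoid.mulm1. Qed.

Let N_of1_rcv t : t \in T1 -> N_of1 n t \in Nrcv T1 n.
Proof. by move=> T1t; apply/setUP; left; apply: imset_f. Qed.

Variables (t0 : V1) (x0 : E1).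
Hypotheses (T1t0 : t0 \in T1) (Out_x0 : x0 \in Out_ tl1 s1).

Let rank_source_span : \rank source_span = (w * L)%N.
Proof.
apply/eqP; rewrite eqn_leq rank_leq_col /=.
case: solN => _ _ _ /(_ _ (N_of1_rcv T1t0)); rewrite in_span_N1 // => dec.
rewrite -[X in (X <= _)%N]dec mxrankS //.
by apply/sumsmx_subP => d _; rewrite genmxE.
Qed.

Let block_lt (r : 'I_(w * L)) : (r %/ L < w)%N.
Proof. by rewrite ltn_divLR. Qed.

Definition source_stack : 'M[F]_(w * L) :=
  \matrix_(r, c)
    N1_global (out_edge card_Out (Ordinal (block_lt r))) (Ordinal (ltn_pmod r L_gt0)) c.

Let row_source_stack r : row r source_stack =
  row (Ordinal (ltn_pmod r L_gt0)) (N1_global (out_edge card_Out (Ordinal (block_lt r)))).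
Proof. by apply/rowP => k; rewrite !mxE. Qed.

Lemma row_N1_global e c : e \in Out_ tl1 s1 ->
  row c (N1_global e) =
  row (Ordinal (block_index_lt (out_index Out_x0 card_Out e) c)) source_stack.
Proof.
move=> Oe; rewrite row_source_stack; set r := Ordinal (block_index_lt _ _).
have -> : Ordinal (block_lt r) = out_index Out_x0 card_Out e.
  by apply/val_inj; rewrite /= divnMDl // divn_small ?addn0.
have -> : Ordinal (ltn_pmod r L_gt0) = c.
  by apply/val_inj; rewrite /= modnMDl modn_small.
by rewrite out_indexK.
Qed.

Lemma source_stack_unit : source_stack \in unitmx.
Proof.
have eq_span : (source_stack :=: source_span)%MS.
  apply/eqmxP/andP; split.
    apply/row_subP => r; rewrite row_source_stack; apply: submx_trans (row_sub _ _) _.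
    exact: N1_global_sub_source.
  apply/sumsmx_subP => e Oe; rewrite genmxE; apply/row_subP => c.
  by rewrite (row_N1_global c Oe) row_sub.
by rewrite -row_free_unit /row_free eq_span rank_source_span.
Qed.

Lemma N1_global_Out e : e \in Out_ tl1 s1 ->
  N1_global e *m invmx source_stack = (id_block F w L (out_index Out_x0 card_Out e))^T.
Proof.
move=> Oe; apply/row_matrixP => c.
rewrite row_mul (row_N1_global c Oe) -row_mul mulmxV ?source_stack_unit //.
by rewrite row_id_blockT.
Qed.

Definition restrict_kernel (d e : E1) := K (e_N1 d) (e_N1 e).
Definition restrict_global (d : E1) := (N1_global d *m invmx source_stack)^T.

Lemma restrict_solves : solves tl1 hd1 s1 T1 restrict_kernel restrict_global.
Proof.
case: solN => K0 _ rec dec; split.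
- by move=> d e de; apply: K0; rewrite /= N_of1_eq.
- exists (out_index Out_x0 card_Out); split; first exact: out_index_inj.
  by move=> e Oe; rewrite /restrict_global N1_global_Out // trmxK.
- move=> e e_s1; rewrite /restrict_global trmx_mul trmxK rec //=.
  rewrite big_In_N1 (negbTE e_s1) Monoid.mulm1 mulmx_sumr; apply: eq_bigr => d _.
  by rewrite mulmxA trmx_mul trmxK.
- move=> t T1t; have := dec _ (N_of1_rcv T1t); rewrite in_span_N1 // => dec_t.
  have eq_span : (in_span hd1 restrict_global t
                  :=: (\sum_(d in In_ hd1 t) <<N1_global d>>)%MS *m invmx source_stack)%MS.
    apply: eqmx_sym; apply: eqmx_trans (sumsmxMr_gen _ _ _) _.
    apply: eqmx_sums => d _; rewrite /restrict_global trmxK.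
    by rewrite (eq_genmx (eqmxMr _ (genmxE _))); apply: eqmx_refl.
  by rewrite eq_span mxrankMfree ?dec_t // row_free_unit unitmx_inv source_stack_unit.
Qed.

End Restriction.

Lemma restriction_solves (V1 E1 : finType) (tl1 hd1 : E1 -> V1) (s1 : V1)
    (T1 : {set V1}) (w n : nat) (F : fieldType) (L : nat)
    (K : Nedge E1 w n -> Nedge E1 w n -> 'M[F]_L) (G : Nedge E1 w n -> 'M[F]_(w * L, L)) :
  (0 < L)%N -> (0 < w)%N -> #|Out_ tl1 s1| = w -> multicast_network tl1 hd1 s1 T1 ->
  solves (@Ntl V1 E1 tl1 w n) (@Nhd V1 E1 hd1 s1 w n) (N_s' V1 n) (Nrcv T1 n) K G ->
  exists K1 G1, @solves _ _ tl1 hd1 F w L s1 T1 K1 G1.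
Proof.
move=> L_gt0 w_gt0 card_Out mult solN.
have [x0 Out_x0] : exists x0, x0 \in Out_ tl1 s1 by apply/set0Pn; rewrite -card_gt0 card_Out.
have [->|[t0 T1t0]] := set_0Vmem T1.
  exact: (solves_no_receivers _ Out_x0 card_Out).
by do 2 eexists; exact: (restrict_solves L_gt0 w_gt0 card_Out mult solN T1t0 Out_x0).
Qed.

Theorem theorem4 (q L : nat) (V1 E1 : finType) (tl1 hd1 : E1 -> V1)
    (s1 : V1) (T1 : {set V1}) :
  prime_power q -> (0 < L)%N ->
  multicast_network tl1 hd1 s1 T1 ->
  (2 <= src_dim tl1 s1)%N ->
  vl_solvable tl1 hd1 s1 T1 q L ->
  ~ sl_solvable tl1 hd1 s1 T1 (q ^ L) ->
  let w := src_dim tl1 s1 in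
  let n := (q ^ L)%N in
  let N_tl := @Ntl V1 E1 tl1 w n in
  let N_hd := @Nhd V1 E1 hd1 s1 w n in
  let N_T := Nrcv T1 n in
  [/\ vl_solvable N_tl N_hd (N_s' V1 n) N_T q L,
      forall q', prime_power q' -> (q' <= q ^ L)%N ->
        ~ sl_solvable N_tl N_hd (N_s' V1 n) N_T q' &
      forall q' L', prime_power q' -> (0 < L')%N -> (q' ^ L' < q ^ L)%N ->
        ~ vl_solvable N_tl N_hd (N_s' V1 n) N_T q' L'].
Proof.
move=> _ L_gt0 mult w_ge2 vl1 nsl1 w n N_tl N_hd N_T.
have w_gt0 : (0 < w)%N by apply: leq_trans w_ge2.
have srcN : src_dim N_tl (N_s' V1 n) = w by apply: src_dim_s'.
have bound q' L' : (0 < L')%N -> vl_solvable N_tl N_hd (N_s' V1 n) N_T q' L' ->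
    (n <= q' ^ L')%N.
  move=> L'_gt0 /(vl_solvableP srcN)[F [<- [K [G solN]]]].
  exact: combination_bound L'_gt0 w_ge2 solN.
split.
- have /(vl_solvableP erefl)[F [cardF [K1 [G1 sol1]]]] := vl1.
  have [_ [iota1 [_ G1_Out]] _ _] := sol1.
  have [] := exists_spread F L_gt0; rewrite cardF => C C_compl.
  apply/(vl_solvableP srcN); exists F; split=> //; do 2 eexists.
  apply: lift_solves L_gt0 w_ge2 _ _ sol1 G1_Out C_compl; first by case: mult.
  exact: multicast_rcv_neq_src mult w_gt0.
- move=> q' _; rewrite leq_eqVlt => /predU1P[eq_q'|lt_q'].
    move=> /(vl_solvableP srcN)[F [cardF [K [G solN]]]]; apply: nsl1.
    apply/(vl_solvableP erefl); exists F; split; first by rewrite cardF.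
    exact: restriction_solves (ltnSn 0) w_gt0 erefl mult solN.
  by move/(bound _ 1%N isT); rewrite expn1 leqNgt lt_q'.
- by move=> q' L' _ L'_gt0 lt_q'L' /(bound _ _ L'_gt0); rewrite leqNgt lt_q'L'.
Qed.
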